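(* Let $X$ be a real Banach space and $Y$ a finite dimensional real Banach space. The following are equivalent: (1) for every finite dimensional subspace $Z$ of $X$ and every $\varepsilon>0$ there is an operator $T\in L(Y,X)$ with $\|T\|=1$ such that $\|z+T(y)\|\ge(1-\varepsilon)(\|z\|+\|y\|)$ for all $y\in Y$, $z\in Z$; (2) for every finite sets $\{z_1,\dots,z_n\}\subseteq S_X$, $\{y_1,\dots,y_m\}\subseteq S_Y$ and every $\varepsilon>0$ there is an operator $T\in L(Y,X)$ with $\|T\|=1$ such that $\|z_i+T(y_j)\|>2-\varepsilon$ for all $1\le i\le n$, $1\le j\le m$.
   Context: $S_W$ denotes the unit sphere of a Banach space $W$; $L(Y,X)$ is the space of bounded linear operators from $Y$ to $X$ with the operator norm. *)

From HB Require Import structures.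
From mathcomp Require Import all_boot all_order all_algebra.
From mathcomp Require Import all_classical all_reals all_analysis.
Set Implicit Arguments. Unset Strict Implicit. Unset Printing Implicit Defensive.
Import Order.TTheory GRing.Theory Num.Theory.
Import numFieldNormedType.Exports.
Local Open Scope classical_set_scope.
Local Open Scope ring_scope.

Definition is_subspace {R : realType} {V : normedModType R} (Z : set V) : Prop :=
  Z 0 /\ forall (a : R) (x y : V), Z x -> Z y -> Z (a *: x + y).

Definition fin_dim_set {R : realType} {V : normedModType R} (Z : set V) : Prop :=
  exists (n : nat) (s : 'I_n -> V), (forall i, Z (s i)) /\
    forall z, Z z -> exists c : 'I_n -> R, z = \sum_(i < n) c i *: s i.

Definition opnorm {R : realType} {Y X : normedModType R} (T : Y -> X) : R :=
  sup [set `|T y| | y in [set y : Y | `|y| <= 1]].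

(* The implication (1) => (2) is (1) applied to the span of the [z_i].
   Conversely, finite-dimensional subspaces are boundedly compact (by induction
   on a spanning family, adding one line at a time), so the unit spheres of [Z]
   and [Y] have finite [eps/3]-nets.  Applying (2) to these nets and using
   [|T| = 1] gives [|u + T v| >= 2 - eps] for all unit [u] in [Z] and [v] in [Y],
   and then [|a u + b T v| >= (a + b)(1 - eps)] for [a, b >= 0] by the triangle
   inequality. *)

From HB Require Import structures.
From mathcomp Require Import all_boot all_order all_algebra.
From mathcomp Require Import all_classical all_reals all_analysis.
From mathcomp Require Import lra finmap.
Set Implicit Arguments.
Unset Strict Implicit.
Unset Printing Implicit Defensive.
Import Order.TTheory GRing.Theory Num.Theory.
Import numFieldNormedType.Exports.
Local Open Scope classical_set_scope.
Local Open Scope ring_scope.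

Section NormedModule.
Context {R : realType} {V : normedModType R}.
Implicit Types (W : set V) (u v w x : V).

Definition nball (M : R) : set V := [set x | `|x| <= M].

Lemma closed_nball M : closed (nball M).
Proof.
rewrite /nball -/((@Num.norm _ V) @^-1` [set x : R | x <= M]).
by apply: (preimage_closed _ (@closed_le _ _)) => y _; exact: norm_continuous.
Qed.

Lemma closed_unit_sphere : closed [set x : V | `|x| = 1].
Proof.
rewrite -/((@Num.norm _ V) @^-1` [set x : R | x = 1]).
by apply: (preimage_closed _ (@closed_eq _ _)) => y _; exact: norm_continuous.
Qed.

Definition normalize v : V := `|v|^-1 *: v.

Lemma norm_normalize v : v != 0 -> `|normalize v| = 1.
Proof. by move=> v0; rewrite normrZ normfV normr_id mulVf // normr_eq0. Qed.

Lemma normalizeK v : `|v| *: normalize v = v.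
Proof.
have [->|v0] := eqVneq v 0; first by rewrite normr0 scale0r.
by rewrite scalerA mulfV ?scale1r // normr_eq0.
Qed.

(* Write [a u + b w] as [a (u + w) - (a - b) w] when [b <= a], symmetrically otherwise. *)
Lemma norm_scaleD_ge u w (a b eta : R) : `|u| <= 1 -> `|w| <= 1 ->
  2 - eta <= `|u + w| -> 0 <= a -> 0 <= b -> 0 <= eta ->
  (a + b) * (1 - eta) <= `|a *: u + b *: w|.
Proof.
move=> hu hw huw a0 b0 eta0.
wlog ba : a b u w hu hw huw a0 b0 / b <= a.
  move=> hwlog; have [|ab] := leP b a; first exact: hwlog.
  rewrite addrC (addrC (a *: u)); apply: hwlog => //; last exact: ltW.
  by rewrite (addrC w).
have -> : a *: u + b *: w = a *: (u + w) - (a - b) *: w.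
  by rewrite scalerDr scalerBl opprB -addrA [a *: w + _]addrC subrK.
rewrite (le_trans _ (lerB_dist _ _)) // !normrZ ger0_norm // ger0_norm ?subr_ge0 //.
have : (a - b) * `|w| <= a - b by rewrite ler_piMr // subr_ge0.
have : a * (2 - eta) <= a * `|u + w| by rewrite ler_wpM2l.
nra.
Qed.

Lemma finite_net (K : set V) (d : R) : compact K -> 0 < d ->
  exists N (p : 'I_N -> V), (forall i, K (p i)) /\
     forall x, K x -> exists i, `|x - p i| < d.
Proof.
move=> cK d0; rewrite compact_cover in cK.
have [D' sD cov] := cK V K (fun x => ball x d) (fun x _ => @ball_open _ _ x d)
   (fun x Kx => @ex_intro2 _ K (fun i => ball i d x) x Kx (ballxx x d0)).
set s := enum_fset D'.
exists (size s), (fun i => nth 0 s i); split.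
  move=> i; have : nth 0 s i \in D' by exact: mem_nth.
  by move/sD; rewrite in_setE.
move=> x /cov [c Dc bc].
have cs : c \in s by exact: Dc.
exists (Ordinal (elimT idP (etrans (index_mem c s) cs))); rewrite /= nth_index //.
by move: bc; rewrite -ball_normE /ball_ /= distrC.
Qed.

Definition boundedly_compact W := forall M, compact (W `&` nball M).

Lemma boundedly_compact_closed W : boundedly_compact W -> closed W.
Proof.
move=> Wk x clx.
have cC : closed (W `&` nball (`|x| + 1)) by exact: compact_closed.
suff [] : (W `&` nball (`|x| + 1)) x by [].
apply: cC => B Bx.
have /clx [y [Wy [By xy]]] : nbhs x (B `&` ball x 1).
  by apply: filterI => //; exact: nbhsx_ballx.
exists y; split => //; split => //.
move: xy; rewrite -ball_normE /nball /= => xy.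
have -> : y = x - (x - y) by rewrite opprB addrC subrK.
by apply: (le_trans (ler_normB _ _)); rewrite lerD2l ltW.
Qed.

Lemma is_subspaceZ W a x : is_subspace W -> W x -> W (a *: x).
Proof. by move=> [W0 WL] Wx; have := WL a x 0 Wx W0; rewrite addr0. Qed.

Definition addline W v : set V := (fun p : V * R => p.1 + p.2 *: v) @` (W `*` setT).

Lemma addline_id W v : is_subspace W -> W v -> addline W v = W.
Proof.
move=> [W0 WL] Wv; apply/seteqP; split => x.
  by case=> [[w t] [Ww _] <-] /=; rewrite addrC; apply: WL.
by move=> Wx; exists (x, 0) => //=; rewrite scale0r addr0.
Qed.

Lemma closed_dist_gt0 W v : closed W -> ~ W v ->
  exists2 d : R, 0 < d & forall w, W w -> d <= `|v - w|.
Proof.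
move=> Wc Wv; apply: contrapT => nd; apply: Wv; apply: Wc => B /nbhs_ballP [e e0 Be].
apply: contrapT => h; apply: nd; exists e => // w Ww.
rewrite leNgt; apply/negP => vw; apply: h; exists w; split => //.
by apply: Be; rewrite -ball_normE.
Qed.

(* [w + t v = t (v - w')] with [w' = - t^-1 w] in [W], so [|t| d <= |w + t v|]. *)
Lemma addline_coef_bound W v (d t M : R) w : is_subspace W ->
  (forall w, W w -> d <= `|v - w|) -> 0 < d -> W w -> `|w + t *: v| <= M ->
  `|t| <= M / d /\ `|w| <= M + M / d * `|v|.
Proof.
move=> Wsub hd d0 Ww hM.
have Ht : `|t| <= M / d.
  have [->|t0] := eqVneq t 0.
    by rewrite normr0 divr_ge0 ?(ltW d0) //; exact: le_trans (normr_ge0 _) hM.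
  have E : w + t *: v = t *: (v - (- t^-1 *: w)).
    by rewrite scaleNr opprK scalerDr scalerA mulfV // scale1r addrC.
  rewrite ler_pdivlMr // (le_trans _ hM) // E normrZ ler_wpM2l //.
  by apply: hd; exact: is_subspaceZ.
split=> //; have -> : w = (w + t *: v) - t *: v by rewrite addrK.
by apply: (le_trans (ler_normB _ _)); rewrite normrZ lerD // ler_wpM2r.
Qed.

Lemma continuous_addline v : continuous (fun p : V * R => p.1 + p.2 *: v).
Proof.
move=> p; apply: continuousD; first exact: cvg_fst.
by apply: continuousZr_tmp; exact: cvg_snd.
Qed.

Lemma boundedly_compact_addline W v : is_subspace W -> boundedly_compact W ->
  boundedly_compact (addline W v).
Proof.
move=> Wsub Wk; have [Wv|] := pselect (W v); first by rewrite addline_id.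
move=> /(closed_dist_gt0 (boundedly_compact_closed Wk)) [d d0 hd] M.
pose M1 := M + M / d * `|v|; pose M2 := M / d.
pose f := fun p : V * R => p.1 + p.2 *: v.
have -> : addline W v `&` nball M =
    f @` ((W `&` nball M1) `*` `[- M2, M2]%classic) `&` nball M.
  apply/seteqP; split => x.
    move=> [[[w t] [Ww _] <-] /= hM]; split => //.
    have [Ht Hw] := addline_coef_bound Wsub hd d0 Ww hM.
    by exists (w, t) => //; split => //=; rewrite in_itv /= -ler_norml.
  by move=> [[[w t] [[Ww _] _] <-] hM]; split => //; exists (w, t).
apply: compact_closedI; last exact: closed_nball.
apply: continuous_compact.
  by apply: continuous_subspaceT; exact: continuous_addline.
by apply: compact_setX => //; exact: segment_compact.
Qed.

Definition span n (s : 'I_n -> V) : set V :=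
  [set x | exists c : 'I_n -> R, x = \sum_(i < n) c i *: s i].

Lemma is_subspace_span n (s : 'I_n -> V) : is_subspace (span s).
Proof.
split; first by exists (fun=> 0); rewrite big1 // => i _; rewrite scale0r.
move=> a x y [cx ->] [cy ->]; exists (fun i => a * cx i + cy i).
rewrite scaler_sumr -big_split; apply: eq_bigr => i _.
by rewrite scalerDl scalerA.
Qed.

Lemma span_mem n (s : 'I_n -> V) i : span s (s i).
Proof.
exists (fun k => (k == i)%:R); rewrite (bigD1 i) //= eqxx scale1r big1 ?addr0 //.
by move=> k /negbTE ->; rewrite scale0r.
Qed.

Lemma span_ord0 (s : 'I_0 -> V) : span s = [set 0].
Proof.
apply/seteqP; split => x; first by case=> c ->; rewrite big_ord0.
by move=> /= ->; exists (fun=> 0); rewrite big_ord0.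
Qed.

Lemma span_ord_recl n (s : 'I_n.+1 -> V) :
  span s = addline (span (fun i => s (lift ord0 i))) (s ord0).
Proof.
apply/seteqP; split => x.
  case=> c ->; rewrite big_ord_recl addrC.
  exists (\sum_(i < n) c (lift ord0 i) *: s (lift ord0 i), c ord0) => //.
  by split => //; eexists.
case=> [[_ t] [[c ->] _] <-] /=.
exists (fun i => if unlift ord0 i is Some j then c j else t).
rewrite big_ord_recl unlift_none addrC; congr (_ + _).
by apply: eq_bigr => i _; rewrite liftK.
Qed.

Lemma boundedly_compact_span n (s : 'I_n -> V) : boundedly_compact (span s).
Proof.
elim: n s => [s|n IH s].
  by rewrite span_ord0 => M; apply: compact_closedI; [exact: compact_set1 | exact: closed_nball].
rewrite span_ord_recl; apply: boundedly_compact_addline; [exact: is_subspace_span | exact: IH].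
Qed.

Lemma compact_span_sphere n (s : 'I_n -> V) : compact (span s `&` [set x | `|x| = 1]).
Proof.
have Sk := @boundedly_compact_span n s.
apply: (subclosed_compact _ (Sk 1)).
  by apply: closedI; [exact: boundedly_compact_closed | exact: closed_unit_sphere].
by move=> x [Wx hx]; split => //; rewrite /nball /= hx.
Qed.

Lemma fin_dim_span n (s : 'I_n -> V) : fin_dim_set (span s).
Proof. by exists n, s; split => //; exact: span_mem. Qed.

Lemma fin_dim_spanE Z : is_subspace Z -> fin_dim_set Z ->
  exists n (s : 'I_n -> V), Z = span s.
Proof.
move=> [Z0 ZL] [n [s [Zs Zsp]]]; exists n, s; apply/seteqP; split => x; first exact: Zsp.
case=> c ->; apply: (big_ind Z) => //.
  by move=> a b Za Zb; have := ZL 1 a b Za Zb; rewrite scale1r.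
by move=> i _; apply: is_subspaceZ.
Qed.

End NormedModule.

Section OperatorNorm.
Context {R : realType} {Y X : normedModType R} (T : {linear Y -> X}).
Hypothesis T1 : opnorm T = 1.

Lemma opnorm1_has_sup : has_sup [set `|T y| | y in [set y : Y | `|y| <= 1]].
Proof.
apply: contrapT => hn; move: T1; rewrite /opnorm sup_out //.
by move/eqP; rewrite eq_sym oner_eq0.
Qed.

Lemma opnorm1_le y : `|T y| <= `|y|.
Proof.
have [->|y0] := eqVneq y 0; first by rewrite linear0 !normr0.
have : `|T (normalize y)| <= 1.
  rewrite -T1; apply: (sup_upper_bound opnorm1_has_sup).
  by exists (normalize y) => //=; rewrite norm_normalize.
rewrite linearZ normrZ normfV normr_id ler_pdivrMl ?normr_gt0 //.
by rewrite mulr1.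
Qed.

Lemma opnorm1_unit_vector : exists x : X, `|x| = 1.
Proof.
have [_ [y _ <-] Ty] := sup_adherent ltr01 opnorm1_has_sup.
rewrite -/(opnorm T) T1 subrr in Ty.
by exists (normalize (T y)); rewrite norm_normalize // -normr_gt0.
Qed.

End OperatorNorm.

Section AlmostL1Sum.
Context {R : realType} {X Y : normedModType R}.

Definition almost_l1_sum :=
  forall Z : set X, is_subspace Z -> fin_dim_set Z ->
  forall eps : R, 0 < eps ->
  exists T : {linear Y -> X}, continuous T /\ opnorm T = 1 /\
    forall (y : Y) (z : X), Z z -> (1 - eps) * (`|z| + `|y|) <= `|z + T y|.

Definition almost_norm2_sums :=
  forall (n m : nat) (z : 'I_n -> X) (y : 'I_m -> Y),
  (forall i, `|z i| = 1) -> (forall j, `|y j| = 1) ->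
  forall eps : R, 0 < eps ->
  exists T : {linear Y -> X}, continuous T /\ opnorm T = 1 /\
    forall i j, 2 - eps < `|z i + T (y j)|.

Lemma almost_norm2_sums_of_l1_sum : almost_l1_sum -> almost_norm2_sums.
Proof.
move=> L1 n m z y z1 y1 eps eps0.
have eps4 : 0 < eps / 4 by rewrite divr_gt0.
have [T [Tc [T1 HT]]] := L1 _ (is_subspace_span z) (fin_dim_span z) _ eps4.
exists T; split=> //; split=> // i j.
apply: lt_le_trans (HT (y j) (z i) (span_mem z i)); rewrite z1 y1; lra.
Qed.

Lemma norm_add_contraction_ge (T : {linear Y -> X}) (u u' : X) (v v' : Y) :
  (forall y, `|T y| <= `|y|) ->
  `|u' + T v'| - `|u - u'| - `|v - v'| <= `|u + T v|.
Proof.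
move=> Tle; have := Tle (v - v'); rewrite linearB /= => Tvv'.
have -> : u' + T v' = (u + T v) - (u - u') - (T v - T v').
  by rewrite !opprB -addrA addrACA [u + (u' - u)]addrC subrK [T v + _]addrC subrK.
have := ler_normB (u + T v - (u - u')) (T v - T v').
have := ler_normB (u + T v) (u - u').
lra.
Qed.

(* The vector [x0] stands in for the normalization of [z = 0]. *)
Lemma l1_sum_bound_of_spheres (Z : set X) (x0 : X) (T : {linear Y -> X}) (eps : R) :
  is_subspace Z -> `|x0| = 1 -> (forall y, `|T y| <= `|y|) -> 0 <= eps ->
  (forall u v, (Z u /\ `|u| = 1 \/ u = x0) -> `|v| = 1 -> 2 - eps <= `|u + T v|) ->
  forall y z, Z z -> (1 - eps) * (`|z| + `|y|) <= `|z + T y|.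
Proof.
move=> Zsub x01 Tle eps0 H y z Zz.
pose u := if z == 0 then x0 else normalize z.
have u1 : `|u| = 1 by rewrite /u; case: eqP => // /eqP; exact: norm_normalize.
have zE : `|z| *: u = z.
  by rewrite /u; case: eqP => [->|_]; rewrite ?normr0 ?scale0r ?normalizeK.
have [->|y0] := eqVneq y 0.
  by rewrite linear0 addr0 normr0 addr0 ler_piMl // lerBlDr lerDl.
have Hu : Z u /\ `|u| = 1 \/ u = x0.
  rewrite /u; case: eqP => [_|/eqP z0]; [by right | left].
  by split; [exact: is_subspaceZ | exact: norm_normalize].
have Ty : T y = `|y| *: T (normalize y) by rewrite -linearZ normalizeK.
rewrite mulrC -{2}zE Ty.
apply: norm_scaleD_ge => //; rewrite ?u1 ?(le_trans (Tle _)) ?norm_normalize //.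
exact: H Hu (norm_normalize y0).
Qed.

Lemma almost_l1_sum_of_norm2_sums : fin_dim_set [set: Y] ->
  almost_norm2_sums -> almost_l1_sum.
Proof.
move=> Yfin N2 Z Zsub Zfin eps eps0.
have [n [s ->]] := fin_dim_spanE Zsub Zfin.
have Ysub : is_subspace [set: Y] by [].
have [m [t YE]] := fin_dim_spanE Ysub Yfin.
(* (2) for empty families gives an operator of norm one, so [X] has a unit vector. *)
have no_ord0 (P : 'I_0 -> Prop) i : P i by case: i.
have [T0 [_ [T01 _]]] := N2 0 0 (fun=> 0) (fun=> 0) (no_ord0 _) (no_ord0 _) 1 ltr01.
have [x0 x01] := opnorm1_unit_vector T01.
pose del := eps / 3; have del0 : 0 < del by rewrite divr_gt0.
pose KZ := span s `&` [set u | `|u| = 1] `|` [set x0].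
have KZk : compact KZ by apply: compactU; [exact: compact_span_sphere | exact: compact_set1].
have [N [p [Kp Hp]]] := finite_net KZk del0.
have [M [q [Kq Hq]]] := finite_net (compact_span_sphere (s := t)) del0.
have p1 i : `|p i| = 1 by case: (Kp i) => [[_ ->] | ->].
have q1 j : `|q j| = 1 by case: (Kq j).
have [T [Tc [T1 HT]]] := N2 N M p q p1 q1 del del0.
exists T; split=> //; split=> //.
apply: l1_sum_bound_of_spheres (is_subspace_span s) x01 (opnorm1_le T1) (ltW eps0) _.
move=> u v Ku v1; have [i ui] := Hp u Ku.
have [j vj] : exists j, `|v - q j| < del by apply: Hq; rewrite -YE.
have := norm_add_contraction_ge u (p i) v (q j) (opnorm1_le T1).
have := HT i j; rewrite /del in ui vj *; lra.
Qed.

End AlmostL1Sum.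

Theorem mainTheorem2 (R : realType) (X Y : completeNormedModType R)
  (hY : fin_dim_set (setT : set Y)) :
  (forall Z : set X, is_subspace Z -> fin_dim_set Z ->
     forall eps : R, 0 < eps ->
     exists T : {linear Y -> X}, continuous T /\ opnorm T = 1 /\
       forall (y : Y) (z : X), Z z -> (1 - eps) * (`|z| + `|y|) <= `|z + T y|)
  <->
  (forall (n m : nat) (z : 'I_n -> X) (y : 'I_m -> Y),
     (forall i, `|z i| = 1) -> (forall j, `|y j| = 1) ->
     forall eps : R, 0 < eps ->
     exists T : {linear Y -> X}, continuous T /\ opnorm T = 1 /\
       forall i j, 2 - eps < `|z i + T (y j)|).
Proof.
split; [exact: almost_norm2_sums_of_l1_sum | exact: almost_l1_sum_of_norm2_sums hY].
Qed.
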